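(* Let $\{(A_k,f_k)\}_{k=0}^n$ be a chain of one-dimensional double extensions by $\{(b_{k+1},d_k)\}_{k=0}^{n-1}$ satisfying (NNP) and (2SP). Then $n\geq 3$ and: (a) $(A_n,f_n)$ is a $2n$-dimensional $2$-step nilpotent quadratic Lie algebra with $A_{n,2}\subseteq Z(A_n)$, $[b_i,b_j]_n=\sum_{k=1}^n D_{ijk}\,b_k^*$, $[b_i^*,\cdot\,]_n=0$, and $f_n(b_i,b_j^* )=\delta_{ij}$, $f_n(b_i,b_j)=f_n(b_i^*,b_j^* )=0$; (b) $(A_n,f_n)$ is reduced if and only if $A_{n,2}=\mathrm{span}\langle \sum_{k=1}^n \hat w_k(b_i,b_j): 1\leq j<i\leq n\rangle$, where $\hat w_k(b_i,b_j):=D_{ijk}\,b_k^*$.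
   Context: Work over a field $\mathbb{K}$ of characteristic zero. A quadratic Lie algebra $(A,f)$ is a Lie algebra with a non-degenerate symmetric bilinear form $f$ with $f([x,y],z)+f(y,[x,z])=0$. For an $f$-skew-symmetric derivation $d$ of $A$ (i.e. $f(d(x),y)+f(x,d(y))=0$), the one-dimensional double extension of $(A,f)$ by $(b,d)$ is $\mathbb{K}b\oplus A\oplus\mathbb{K}b^*$ with bracket $[\lambda b+a+\mu b^*,\lambda' b+a'+\mu' b^*]=\lambda d(a')-\lambda' d(a)+[a,a']_A+f(d(a),a')b^*$ and form $(\lambda b+a+\mu b^*,\lambda' b+a'+\mu' b^* )\mapsto\lambda\mu'+\lambda'\mu+f(a,a')$. A chain of one-dimensional double extensions $\{(A_k,f_k)\}_{k=0}^n$ by $\{(b_{k+1},d_k)\}_{k=0}^{n-1}$ is defined by $A_0=\{0\}$, $f_0=0$, and for $0\le k\le n-1$, $d_k$ an $f_k$-skew-symmetric derivation of $A_k$ and $(A_{k+1},f_{k+1})$ the one-dimensional double extension of $(A_k,f_k)$ by $(b_{k+1},d_k)$, $A_{k+1}=\mathbb{K}b_{k+1}\oplus A_k\oplus\mathbb{K}b_{k+1}^*$. Thus $A_k$ has basis $b_k,\dots,b_1,b_1^*,\dots,b_k^*$; set $A_{k,1}=\mathrm{span}\langle b_1,\dots,b_k\rangle$, $A_{k,2}=\mathrm{span}\langle b_1^*,\dots,b_k^*\rangle$. The chain satisfies (NNP) if $d_k\neq0$ for some $k$, and (2SP) if $\mathrm{im}\,d_k\subseteq A_{k,2}\subseteq\ker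 d_k$ for every $k\ge1$. For indices $i,j,k\in\{1,\dots,n\}$, $D_{ijk}:=\mathrm{sgn}(\sigma)f_{\sigma(k)-1}(d_{\sigma(k)-1}(b_{\sigma(i)}),b_{\sigma(j)})$ where $\sigma$ is the permutation of $\{i,j,k\}$ with $\sigma(i)<\sigma(j)<\sigma(k)$, and $D_{ijk}=0$ if two indices coincide. A quadratic Lie algebra $L$ is reduced if $Z(L)\subseteq [L,L]$; $2$-step nilpotent means $[L,[L,L]]=0\ne[L,L]$. *)

From mathcomp Require Import all_boot all_order all_algebra.
Set Implicit Arguments. Unset Strict Implicit. Unset Printing Implicit Defensive.
Import GRing.Theory.
Local Open Scope ring_scope.

Section LieNotions.
Variables (K : fieldType) (V : lmodType K).

Definition in_derived (br : V -> V -> V) (w : V) : Prop :=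
  exists s : seq (V * V), w = \sum_(p <- s) br p.1 p.2.

Definition in_center (br : V -> V -> V) (x : V) : Prop :=
  forall y : V, br x y = 0.

Definition is_Lie_algebra (br : V -> V -> V) : Prop :=
  [/\ (forall (c : K) x y z, br (c *: x + y) z = c *: br x z + br y z),
      (forall (c : K) x y z, br x (c *: y + z) = c *: br x y + br x z),
      (forall x, br x x = 0) &
      (forall x y z, br x (br y z) + br y (br z x) + br z (br x y) = 0)].

Definition is_quadratic_Lie (br : V -> V -> V) (f : V -> V -> K) : Prop :=
  [/\ is_Lie_algebra br,
      (forall (c : K) x y z, f (c *: x + y) z = c * f x z + f y z),
      (forall x y, f x y = f y x),
      (forall x, (forall y, f x y = 0) -> x = 0) &
      (forall x y z, f (br x y) z + f y (br x z) = 0)].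

Definition two_step_nilpotent (br : V -> V -> V) : Prop :=
  (forall x w, in_derived br w -> br x w = 0) /\
  (exists w, in_derived br w /\ w != 0).

Definition reduced (br : V -> V -> V) : Prop :=
  forall x, in_center br x -> in_derived br x.

End LieNotions.

(* Chains of one-dimensional double extensions, modelled inside the ambient  *)
(* 2n-dimensional space V = 'M[K]_(2,n): for x : V, x 0 i is the coordinate  *)
(* of b_{i+1} and x 1 i the coordinate of b_{i+1}^* (i : 'I_n, 0-based).     *)
(* A_k is the subspace where all coordinates of index >= k vanish.          *)
Section Chain.
Variables (K : fieldType) (n : nat).

Notation V := 'M[K]_(2, n).

Definition inA (k : nat) (x : V) : Prop :=
  forall (r : 'I_2) (i : 'I_n), (k <= i)%N -> x r i = 0.

Definition inA2 (k : nat) (x : V) : Prop :=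
  inA k x /\ forall i : 'I_n, x 0 i = 0.

Definition projA (k : nat) (x : V) : V :=
  \matrix_(r < 2, i < n) (if (i < k)%N then x r i else 0).

(* coordinates of b_{k+1} and b_{k+1}^* (0 if k >= n) *)
Definition coordb (k : nat) (x : V) : K :=
  oapp (fun i : 'I_n => x 0 i) 0 (insub k).
Definition coords (k : nat) (x : V) : K :=
  oapp (fun i : 'I_n => x 1 i) 0 (insub k).

Definition bvec (k : nat) : V :=
  \matrix_(r < 2, i < n) (if (r == 0) && (i == k :> nat) then 1 else 0).
Definition bsvec (k : nat) : V :=
  \matrix_(r < 2, i < n) (if (r == 1) && (i == k :> nat) then 1 else 0).

(* f_k : f_0 = 0, f_{k+1}(l b + a + m bs, l' b + a' + m' bs)
                  = l m' + l' m + f_k(a, a') *)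
Fixpoint formA (k : nat) : V -> V -> K :=
  match k with
  | 0 => fun _ _ => 0
  | k'.+1 => fun x y =>
      coordb k' x * coords k' y + coordb k' y * coords k' x
      + formA k' (projA k' x) (projA k' y)
  end.

(* [ , ]_k : [ , ]_0 = 0, and [ , ]_{k+1} is the double extension bracket
   of (A_k, f_k) by (b_{k+1}, d_k) *)
Fixpoint brA (d : nat -> V -> V) (k : nat) : V -> V -> V :=
  match k with
  | 0 => fun _ _ => 0
  | k'.+1 => fun x y =>
      let a := projA k' x in let a' := projA k' y in
      coordb k' x *: d k' a' - coordb k' y *: d k' a + brA d k' a a'
      + formA k' (d k' a) a' *: bsvec k'
  end.

Definition skew_derivation (d : nat -> V -> V) (k : nat) : Prop :=
  [/\ (forall x, inA k x -> inA k (d k x)),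
      (forall (c : K) x y, inA k x -> inA k y -> d k (c *: x + y) = c *: d k x + d k y),
      (forall x y, inA k x -> inA k y ->
         d k (brA d k x y) = brA d k (d k x) y + brA d k x (d k y)) &
      (forall x y, inA k x -> inA k y -> formA k (d k x) y + formA k x (d k y) = 0)].

Definition is_chain (d : nat -> V -> V) : Prop :=
  forall k, (k < n)%N -> skew_derivation d k.

Definition NNP (d : nat -> V -> V) : Prop :=
  exists k, [/\ (k < n)%N & exists x, inA k x /\ d k x != 0].

Definition twoSP (d : nat -> V -> V) : Prop :=
  forall k, (1 <= k)%N -> (k < n)%N ->
    (forall x, inA k x -> inA2 k (d k x)) /\
    (forall x, inA2 k x -> d k x = 0).

Definition sort_sign (i j k : nat) : K :=
  (-1) ^+ ((i > j)%N + (i > k)%N + (j > k)%N).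

(* D_{ijk} (0-based: i stands for b_{i+1}); p < q < r is the sorted triple,
   and f_{sigma(k)-1}(d_{sigma(k)-1} b_{sigma(i)}, b_{sigma(j)}) becomes
   formA r (d r (bvec p)) (bvec q). *)
Definition Dcoef (d : nat -> V -> V) (i j k : nat) : K :=
  if (i == j) || (i == k) || (j == k) then 0 else
  let p := minn i (minn j k) in
  let r := maxn i (maxn j k) in
  let q := (i + j + k - p - r)%N in
  sort_sign i j k * formA r (d r (bvec p)) (bvec q).

Definition what (d : nat -> V -> V) (i j : nat) : V :=
  \sum_(k < n) Dcoef d i j k *: bsvec k.

Definition in_span_what (d : nat -> V -> V) (x : V) : Prop :=
  exists c : 'I_n -> 'I_n -> K,
    x = \sum_(i < n) \sum_(j < n | (j < i)%N) c i j *: what d i j.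

End Chain.

Arguments bvec {K n} k.
Arguments bsvec {K n} k.

(* Write x_i and x_i^* for the coordinates of x on b_i and b_i^*.  Under (2SP)
   each d_k maps A_k into span<b_1^*, ..., b_k^*>, so it is described by the
   numbers c_k(i,j) = f_k(d_k b_i, b_j), i, j < k, which f_k-skewness makes
   antisymmetric (char K <> 2).  These are the D_{ijk} whose largest index is k,
   and D is totally antisymmetric, so unfolding the recursive bracket gives
     [x, y]_n = sum_m (sum_{i,j} x_i y_j D_{ijm}) b_m^*.
   Everything follows from this formula: the bracket takes values in A_{n,2}
   and vanishes on it, hence 2-step nilpotency; invariance of f_n is the
   antisymmetry of D in its last two indices; [A_n, A_n] is spanned by the
   vectors sum_k D_{ijk} b_k^*; and as Z(A_n) is f_n-orthogonal to [A_n, A_n]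
   while f_n(x, b_j^* ) = x_j, the centre lies in A_{n,2} once A_{n,2} is
   contained in [A_n, A_n].  (NNP) yields some c_k(i,j) <> 0, so i <> j < k < n
   gives n >= 3 and a nonzero bracket [b_i, b_j]. *)

From HB Require Import structures.
From mathcomp Require Import all_boot all_order all_algebra.
From mathcomp Require Import zify ring.
Set Implicit Arguments. Unset Strict Implicit. Unset Printing Implicit Defensive.
Import GRing.Theory.
Local Open Scope ring_scope.

Section Coordinates.
Variables (K : fieldType) (n : nat).
Local Notation V := 'M[K]_(2, n).

Lemma coordb_is_scalar k : scalar (@coordb K n k).
Proof.
by move=> c x y; rewrite /coordb; case: insubP => [i _ _|_] /=; rewrite ?mxE ?mulr0 ?addr0.
Qed.
HB.instance Definition _ k :=
  GRing.isLinear.Build K V K *%R (coordb k) (coordb_is_scalar k).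

Lemma coords_is_scalar k : scalar (@coords K n k).
Proof.
by move=> c x y; rewrite /coords; case: insubP => [i _ _|_] /=; rewrite ?mxE ?mulr0 ?addr0.
Qed.
HB.instance Definition _ k :=
  GRing.isLinear.Build K V K *%R (coords k) (coords_is_scalar k).

Lemma coordb_ord (i : 'I_n) (x : V) : coordb i x = x 0 i.
Proof. by rewrite /coordb valK. Qed.

Lemma coords_ord (i : 'I_n) (x : V) : coords i x = x 1 i.
Proof. by rewrite /coords valK. Qed.

Lemma coordb_out k (x : V) : (n <= k)%N -> coordb k x = 0.
Proof. by move=> nk; rewrite /coordb insubN // -leqNgt. Qed.

Lemma coords_out k (x : V) : (n <= k)%N -> coords k x = 0.
Proof. by move=> nk; rewrite /coords insubN // -leqNgt. Qed.

Lemma coordb_bvec i l : coordb i (bvec l : V) = ((i == l) && (i < n)%N)%:R.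
Proof.
rewrite /coordb; case: insubP => [j _ <-|/negbTE->] /=; last by rewrite andbF.
by rewrite mxE eqxx ltn_ord andbT; case: eqP.
Qed.

Lemma coords_bvec i l : coords i (bvec l : V) = 0.
Proof. by rewrite /coords; case: insubP => [j _ _|] //=; rewrite mxE. Qed.

Lemma coordb_bsvec i l : coordb i (bsvec l : V) = 0.
Proof. by rewrite /coordb; case: insubP => [j _ _|] //=; rewrite mxE. Qed.

Lemma coords_bsvec i l : coords i (bsvec l : V) = ((i == l) && (i < n)%N)%:R.
Proof.
rewrite /coords; case: insubP => [j _ <-|/negbTE->] /=; last by rewrite andbF.
by rewrite mxE eqxx ltn_ord andbT; case: eqP.
Qed.

Lemma coordb_projA k i (x : V) :
  coordb i (projA k x) = if (i < k)%N then coordb i x else 0.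
Proof. by rewrite /coordb; case: insubP => [j _ <-|] /=; [rewrite mxE | case: ifP]. Qed.

Lemma coords_projA k i (x : V) :
  coords i (projA k x) = if (i < k)%N then coords i x else 0.
Proof. by rewrite /coords; case: insubP => [j _ <-|] /=; [rewrite mxE | case: ifP]. Qed.

Lemma eq_coord (x y : V) :
  (forall i, (i < n)%N -> coordb i x = coordb i y) ->
  (forall i, (i < n)%N -> coords i x = coords i y) -> x = y.
Proof.
move=> eqb eqs; apply/matrixP => r j.
have := eqb j (ltn_ord j); have := eqs j (ltn_ord j).
rewrite !coordb_ord !coords_ord.
by case: r => -[|[|//]] r2 /=; [rewrite (_ : Ordinal r2 = 0) | rewrite (_ : Ordinal r2 = 1)];
  try exact: val_inj.
Qed.

Lemma inA_projA k (x : V) : inA k (projA k x).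
Proof. by move=> r i ki; rewrite mxE ltnNge ki. Qed.

Lemma inA_coord k (x : V) :
  inA k x <-> forall i, (k <= i)%N -> coordb i x = 0 /\ coords i x = 0.
Proof.
split=> [xA i ki|x0].
  by rewrite /coordb /coords; case: insubP => [j _ ej|] //=; rewrite !xA ?ej.
suff -> : x = projA k x by apply: inA_projA.
apply: eq_coord => i ilt; rewrite ?coordb_projA ?coords_projA.
  by case: ltnP => // /x0[->].
by case: ltnP => // /x0[_ ->].
Qed.

Lemma inA2_coord k (x : V) :
  inA2 k x <-> (forall i, (k <= i)%N -> coords i x = 0) /\ forall i, coordb i x = 0.
Proof.
split=> [[/inA_coord xA xb]|[xs xb]].
  split=> [i /xA[] //|i]; rewrite /coordb; case: insubP => [j _ _|] //=.
split=> [|i]; last by rewrite -coordb_ord.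
by apply/inA_coord => i ki; rewrite xb xs.
Qed.

Lemma inA2n (x : V) : inA2 n x <-> forall i, coordb i x = 0.
Proof.
by rewrite inA2_coord; split=> [[]|xb] //; split=> // i /coords_out->.
Qed.

Lemma inA_bvec k i : (i < k)%N -> inA k (bvec i : V).
Proof.
move=> ik; apply/inA_coord => j kj; rewrite coords_bvec coordb_bvec.
by rewrite (_ : j == i = false) //; apply: contra_leqF kj => /eqP->.
Qed.

Lemma inA2_bsvec i : inA2 n (bsvec i : V).
Proof. by apply/inA2n => j; rewrite coordb_bsvec. Qed.

Lemma sum_nat_delta (F : nat -> K) k i :
  \sum_(0 <= l < k) (l == i)%:R * F l = if (i < k)%N then F i else 0.
Proof.
rewrite (eq_bigr (fun l => if l == i then F l else 0)); last by move=> l _; rewrite mulr_natl mulrb.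
by rewrite -big_mkcond big_nat1_eq.
Qed.

Lemma coords_sum_bsvec (s : nat -> K) k i : (i < n)%N ->
  coords i (\sum_(0 <= l < k) s l *: (bsvec l : V)) = if (i < k)%N then s i else 0.
Proof.
move=> ilt; rewrite linear_sum -sum_nat_delta; apply: eq_bigr => l _.
by rewrite linearZ /= coords_bsvec ilt andbT mulrC eq_sym.
Qed.

Lemma coordb_sum_bsvec (s : nat -> K) k i :
  coordb i (\sum_(0 <= l < k) s l *: (bsvec l : V)) = 0.
Proof. by rewrite linear_sum big1 // => l _; rewrite linearZ /= coordb_bsvec mulr0. Qed.

Lemma formAE k (x y : V) :
  formA k x y = \sum_(0 <= i < k) (coordb i x * coords i y + coordb i y * coords i x).
Proof.
elim: k x y => [|k IH] x y /=; first by rewrite big_geq.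
rewrite IH big_nat_recr //= addrC; congr (_ + _).
by apply: eq_big_nat => i /andP[_ ik]; rewrite !coordb_projA !coords_projA ik.
Qed.

Lemma formA0l k (x : V) : formA k 0 x = 0.
Proof. by rewrite formAE big1 // => i _; rewrite !raddf0 !mul0r mulr0 addr0. Qed.

Lemma formAC k (x y : V) : formA k x y = formA k y x.
Proof. by rewrite !formAE; apply: eq_bigr => i _; rewrite addrC. Qed.

Lemma formA_linl k c (x y z : V) :
  formA k (c *: x + y) z = c * formA k x z + formA k y z.
Proof.
rewrite !formAE mulr_sumr -big_split; apply: eq_bigr => i _ /=.
by rewrite !linearP /=; ring.
Qed.

Lemma formA_bvecr k (x : V) l : (l < n)%N ->
  formA k x (bvec l) = if (l < k)%N then coords l x else 0.
Proof.
move=> ln; rewrite formAE -(sum_nat_delta (fun i => coords i x)); apply: eq_bigr => i _.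
by rewrite coords_bvec coordb_bvec mulr0 add0r; case: eqP => [->|]; rewrite ?ln.
Qed.

Lemma formA_bsvecr k (x : V) l : (l < n)%N ->
  formA k x (bsvec l) = if (l < k)%N then coordb l x else 0.
Proof.
move=> ln; rewrite formAE -(sum_nat_delta (fun i => coordb i x)); apply: eq_bigr => i _.
by rewrite coords_bsvec coordb_bsvec mul0r addr0 mulrC; case: eqP => [->|]; rewrite ?ln.
Qed.

Lemma formAn_nondegenerate (x : V) : (forall y, formA n x y = 0) -> x = 0.
Proof.
move=> x0; apply: eq_coord => i ilt; rewrite raddf0.
  by rewrite -(x0 (bsvec i)) formA_bsvecr // ilt.
by rewrite -(x0 (bvec i)) formA_bvecr // ilt.
Qed.

End Coordinates.

Arguments inA_bvec {K n k i}.
Arguments inA2_bsvec {K n}.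
#[local] Hint Resolve inA_projA : core.

Section StructureConstants.
Variables (K : fieldType) (n : nat) (d : nat -> 'M[K]_(2, n) -> 'M[K]_(2, n)).

(* By [coords_d], d_k a = sum_j (sum_i a_i * dmx k i j) b_j^* for a in A_k. *)
Definition dmx k i j := formA k (d k (bvec i)) (bvec j : 'M[K]_(2, n)).

Lemma sort_sign_swap12 i j l : i != j -> sort_sign K j i l = - sort_sign K i j l.
Proof. by rewrite /sort_sign; case: ltngtP => //= _ _; rewrite !exprD; ring. Qed.

Lemma sort_sign_swap23 i j l : j != l -> sort_sign K i l j = - sort_sign K i j l.
Proof. by rewrite /sort_sign; case: (ltngtP j l) => //= _ _; rewrite !exprD; ring. Qed.

Lemma Dcoef_swap12 i j l : Dcoef d j i l = - Dcoef d i j l.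
Proof.
rewrite /Dcoef (eq_sym j i) -!orbA (orbC (j == l)).
case: ifPn => [|/norP[ij _]]; first by rewrite oppr0.
by rewrite minnCA maxnCA (addnC j i) sort_sign_swap12 ?mulNr.
Qed.

Lemma Dcoef_swap23 i j l : Dcoef d i l j = - Dcoef d i j l.
Proof.
rewrite /Dcoef (eq_sym l j) -!orbA (orbCA (i == l)).
case: ifPn => [|/norP[_ /norP[_ jl]]]; first by rewrite oppr0.
by rewrite (minnC l j) (maxnC l j) -(addnAC i j l) sort_sign_swap23 ?mulNr.
Qed.

Lemma Dcoef_diag12 i l : Dcoef d i i l = 0.
Proof. by rewrite /Dcoef eqxx. Qed.

Lemma Dcoef_diag13 i j : Dcoef d i j i = 0.
Proof. by rewrite /Dcoef eqxx orbT. Qed.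

Lemma Dcoef_diag23 i j : Dcoef d i j j = 0.
Proof. by rewrite /Dcoef eqxx !orbT. Qed.

Lemma Dcoef_sorted k i j : (i < j < k)%N -> Dcoef d k i j = dmx k i j.
Proof.
move=> /andP[ij jk]; rewrite /Dcoef /sort_sign.
have -> : (k == i) || (k == j) || (i == j) = false by apply/negbTE; lia.
have -> : minn k (minn i j) = i by lia.
have -> : maxn k (maxn i j) = k by lia.
have -> : (k + i + j - i - k = j)%N by lia.
have -> : (j < i)%N = false by lia.
by rewrite (ltn_trans ij jk) jk /= expr2 mulN1r opprK mul1r.
Qed.

Definition brcoef k (x y : 'M[K]_(2, n)) m :=
  \sum_(0 <= i < k) \sum_(0 <= j < k) coordb i x * coordb j y * Dcoef d i j m.

Lemma brcoef_projA k x y m : brcoef k (projA k x) (projA k y) m = brcoef k x y m.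
Proof.
apply: eq_big_nat => i /andP[_ ik]; apply: eq_big_nat => j /andP[_ jk].
by rewrite !coordb_projA ik jk.
Qed.

Lemma brcoefN k x y m : brcoef k y x m = - brcoef k x y m.
Proof.
rewrite /brcoef exchange_big -sumrN; apply: eq_bigr => i _.
by rewrite -sumrN; apply: eq_bigr => j _; rewrite Dcoef_swap12; ring.
Qed.

Lemma brcoefS k x y m : brcoef k.+1 x y m = brcoef k x y m
  + coordb k x * \sum_(0 <= j < k) coordb j y * Dcoef d k j m
  - coordb k y * \sum_(0 <= i < k) coordb i x * Dcoef d k i m.
Proof.
rewrite /brcoef big_nat_recr //= big_nat_recr //= Dcoef_diag12 mulr0 addr0.
under eq_bigr do rewrite big_nat_recr //=.
rewrite big_split /= !mulr_sumr -sumrN.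
have -> : \sum_(0 <= i < k) coordb i x * coordb k y * Dcoef d i k m =
          \sum_(0 <= i < k) - (coordb k y * (coordb i x * Dcoef d k i m)).
  by apply: eq_bigr => i _; rewrite Dcoef_swap12; ring.
have -> : \sum_(0 <= j < k) coordb k x * coordb j y * Dcoef d k j m =
          \sum_(0 <= j < k) coordb k x * (coordb j y * Dcoef d k j m).
  by apply: eq_bigr => j _; ring.
ring.
Qed.

End StructureConstants.

Section Chain.
Variables (K : fieldType) (n : nat) (d : nat -> 'M[K]_(2, n) -> 'M[K]_(2, n)).
Local Notation V := 'M[K]_(2, n).
Hypothesis two_neq0 : 2%:R != 0 :> K.
Hypothesis d_skew : forall k, (k < n)%N -> forall x y : V, inA k x -> inA k y ->
  formA k (d k x) y + formA k x (d k y) = 0.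
Hypothesis d_im : forall k, (k < n)%N -> forall x : V, inA k x -> inA2 k (d k x).

Lemma eq_oppr0 (a : K) : a = - a -> a = 0.
Proof.
move=> aN; have /eqP : a *+ 2 = 0 by rewrite mulr2n {2}aN subrr.
by rewrite -mulr_natr mulf_eq0 (negbTE two_neq0) orbF => /eqP.
Qed.

Lemma dmxN k i j : (k < n)%N -> (i < k)%N -> (j < k)%N -> dmx d k i j = - dmx d k j i.
Proof.
move=> kn ik jk; have /eqP := d_skew kn (inA_bvec ik) (inA_bvec jk).
by rewrite [formA k (bvec i) _]formAC addr_eq0 => /eqP.
Qed.

Lemma dmx_diag k i : (k < n)%N -> (i < k)%N -> dmx d k i i = 0.
Proof. by move=> kn ik; apply: eq_oppr0; apply: dmxN. Qed.

Lemma coordb_d k (a : V) i : (k < n)%N -> inA k a -> coordb i (d k a) = 0.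
Proof. by move=> kn /(d_im kn)/inA2_coord[]. Qed.

Lemma coords_d k (a : V) i : (k < n)%N -> inA k a ->
  coords i (d k a) = if (i < k)%N then \sum_(0 <= m < k) coordb m a * dmx d k m i else 0.
Proof.
move=> kn aA; case: ltnP => [ik|]; last by have /inA2_coord[/(_ i)] := d_im kn aA.
have /eqP := d_skew kn aA (inA_bvec ik).
rewrite formA_bvecr ?ik ?(ltn_trans ik) // addr_eq0 => /eqP->.
rewrite formAE -sumrN; apply: eq_big_nat => m /andP[_ mk].
rewrite (coordb_d _ kn (inA_bvec ik)) mul0r addr0 (dmxN kn mk ik) mulrN.
by rewrite /dmx formA_bvecr ?mk ?(ltn_trans mk).
Qed.

Lemma coords_dprojA k (x : V) i : (k < n)%N ->
  coords i (d k (projA k x)) = if (i < k)%N then \sum_(0 <= m < k) coordb m x * dmx d k m i else 0.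
Proof.
move=> kn; rewrite coords_d //; case: ifP => // _.
by apply: eq_big_nat => m /andP[_ mk]; rewrite coordb_projA mk.
Qed.

Lemma formA_dprojA k (x y : V) : (k < n)%N ->
  formA k (d k (projA k x)) (projA k y) =
  \sum_(0 <= i < k) \sum_(0 <= j < k) coordb i x * coordb j y * dmx d k i j.
Proof.
move=> kn; rewrite formAE exchange_big; apply: eq_big_nat => j /andP[_ jk].
rewrite coordb_d // mul0r add0r coords_dprojA // jk coordb_projA jk mulrC mulr_suml.
by apply: eq_bigr => i _; ring.
Qed.

Lemma exists_dmx_neq0 k (a : V) : (k < n)%N -> inA k a -> d k a != 0 ->
  exists i j, [/\ (i < k)%N, (j < k)%N & dmx d k i j != 0].
Proof.
move=> kn aA.
have [/existsP[i /existsP[j ij]] _|/existsPn dmx0] :=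
  boolP [exists i : 'I_k, exists j : 'I_k, dmx d k i j != 0].
  by exists i, j; rewrite !ltn_ord.
move=> /negP[]; apply/eqP/eq_coord => i ilt.
  by rewrite coordb_d // raddf0.
rewrite coords_d // raddf0; case: ltnP => // ik.
rewrite big_nat big1 // => m /andP[_ mk].
by have /existsPn/(_ (Ordinal ik))/negPn/eqP-> := dmx0 (Ordinal mk); rewrite mulr0.
Qed.

Lemma Dcoef_top1 k i j : (k < n)%N -> (i < k)%N -> (j < k)%N -> Dcoef d k i j = dmx d k i j.
Proof.
move=> kn ik jk; case: (ltngtP i j) => [ij|ji|->].
- by rewrite Dcoef_sorted ?ij.
- by rewrite Dcoef_swap23 Dcoef_sorted ?ji // dmxN ?opprK.
- by rewrite Dcoef_diag23 dmx_diag.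
Qed.

Lemma Dcoef_top3 k i j : (k < n)%N -> (i < k)%N -> (j < k)%N -> Dcoef d i j k = dmx d k i j.
Proof. by move=> kn ik jk; rewrite Dcoef_swap23 Dcoef_swap12 Dcoef_top1 ?opprK. Qed.

Lemma brAE k (x y : V) : (k <= n)%N ->
  brA d k x y = \sum_(0 <= m < k) brcoef d k x y m *: bsvec m.
Proof.
elim: k x y => [|k IH] x y kn /=; first by rewrite big_geq.
rewrite IH ?(ltnW kn) //; apply: eq_coord => i ilt.
  rewrite !raddfD raddfN /= !linearZ /= !coordb_d //.
  by rewrite coordb_bsvec !coordb_sum_bsvec !mulr0 subrr !addr0.
rewrite !raddfD raddfN /= !linearZ /= !coords_sum_bsvec // !coords_dprojA //.
rewrite coords_bsvec ilt andbT brcoef_projA ltnS brcoefS.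
case: (ltngtP i k) => [ik|ki|->].
- rewrite mulr0 addr0.
  under [in RHS]eq_big_nat => j /andP[_ jk] do rewrite Dcoef_top1 //.
  under [X in _ = _ - _ * X]eq_big_nat => j /andP[_ jk] do rewrite Dcoef_top1 //.
  ring.
- by rewrite !mulr0 subrr !addr0.
- rewrite !mulr0 subrr !add0r mulr1 formA_dprojA //.
  have Dk0 z : \sum_(0 <= j < k) coordb j z * Dcoef d k j k = 0.
    by apply: big1 => j _; rewrite Dcoef_diag13 mulr0.
  rewrite !Dk0 !mulr0 subr0 addr0 /brcoef.
  apply: eq_big_nat => l /andP[_ lk]; apply: eq_big_nat => j /andP[_ jk].
  by rewrite Dcoef_top3.
Qed.

Local Notation Br := (brA d n).

Lemma coordb_brA i (x y : V) : coordb i (Br x y) = 0.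
Proof. by rewrite brAE // coordb_sum_bsvec. Qed.

Lemma coords_brA m (x y : V) : (m < n)%N -> coords m (Br x y) = brcoef d n x y m.
Proof. by move=> mn; rewrite brAE // coords_sum_bsvec // mn. Qed.

Lemma inA2_brA (x y : V) : inA2 n (Br x y).
Proof. by apply/inA2n => i; rewrite coordb_brA. Qed.

Lemma brA_anti (x y : V) : Br y x = - Br x y.
Proof.
apply: eq_coord => i ilt; rewrite raddfN /=; first by rewrite !coordb_brA oppr0.
by rewrite !coords_brA // brcoefN.
Qed.

Lemma brA_alt (x : V) : Br x x = 0.
Proof.
apply: eq_coord => i ilt; rewrite raddf0 ?coordb_brA // coords_brA //.
by apply: eq_oppr0; rewrite -brcoefN.
Qed.

Lemma brA_linl c (x y z : V) : Br (c *: x + y) z = c *: Br x z + Br y z.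
Proof.
apply: eq_coord => i ilt; rewrite linearP /=; first by rewrite !coordb_brA mulr0 addr0.
rewrite !coords_brA // /brcoef mulr_sumr -big_split; apply: eq_bigr => a _.
by rewrite mulr_sumr -big_split; apply: eq_bigr => b _; rewrite linearP /=; ring.
Qed.

Lemma brA_linr c (x y z : V) : Br x (c *: y + z) = c *: Br x y + Br x z.
Proof. by rewrite brA_anti brA_linl !(brA_anti x) opprD scalerN !opprK. Qed.

Lemma brA_A2l (w x : V) : inA2 n w -> Br w x = 0.
Proof.
move/inA2n=> w0; apply: eq_coord => i ilt; rewrite raddf0 ?coordb_brA // coords_brA //.
by apply: big1 => a _; apply: big1 => b _; rewrite w0 !mul0r.
Qed.

Lemma brA_A2r (x w : V) : inA2 n w -> Br x w = 0.
Proof. by move=> /brA_A2l w0; rewrite brA_anti w0 oppr0. Qed.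

Lemma brAZl c (x y : V) : Br (c *: x) y = c *: Br x y.
Proof.
rewrite -[c *: x]addr0 brA_linl [Br 0 y]brA_A2l ?addr0 //.
by apply/inA2n => i; rewrite raddf0.
Qed.

Definition brform (x y z : V) :=
  \sum_(0 <= i < n) \sum_(0 <= j < n) \sum_(0 <= m < n)
    coordb i x * coordb j y * coordb m z * Dcoef d i j m.

Lemma formA_brA (x y z : V) : formA n (Br x y) z = brform x y z.
Proof.
rewrite formAE.
under eq_big_nat => m /andP[_ mn] do rewrite coordb_brA mul0r add0r coords_brA //.
under eq_bigr do rewrite /brcoef mulr_sumr.
rewrite exchange_big /=; apply: eq_bigr => i _.
under eq_bigr do rewrite mulr_sumr.
rewrite exchange_big /=; apply: eq_bigr => j _.
by apply: eq_bigr => m _; ring.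
Qed.

Lemma brformN (x y z : V) : brform x z y = - brform x y z.
Proof.
rewrite /brform -sumrN; apply: eq_bigr => i _.
rewrite exchange_big /= -sumrN; apply: eq_bigr => j _.
by rewrite -sumrN; apply: eq_bigr => m _; rewrite Dcoef_swap23; ring.
Qed.

Lemma formA_invariant (x y z : V) : formA n (Br x y) z + formA n y (Br x z) = 0.
Proof. by rewrite [formA n y _]formAC !formA_brA (brformN x y z) addrN. Qed.

Lemma brA_quadratic : is_quadratic_Lie Br (formA n).
Proof.
split; [split | exact: formA_linl | exact: formAC | exact: formAn_nondegenerate |
  exact: formA_invariant].
- exact: brA_linl.
- exact: brA_linr.
- exact: brA_alt.
- by move=> x y z; rewrite !(brA_A2r _ (inA2_brA _ _)) !addr0.
Qed.

Lemma what_nat i j : what d i j = \sum_(0 <= k < n) Dcoef d i j k *: (bsvec k : V).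
Proof. by rewrite big_mkord. Qed.

Lemma coordb_what i j m : coordb m (what d i j) = 0.
Proof. by rewrite what_nat coordb_sum_bsvec. Qed.

Lemma coords_what i j m : (m < n)%N -> coords m (what d i j) = Dcoef d i j m.
Proof. by move=> mn; rewrite what_nat coords_sum_bsvec // mn. Qed.

Lemma brA_bvec (i j : 'I_n) : Br (bvec i) (bvec j) = what d i j.
Proof.
apply: eq_coord => m mn; first by rewrite coordb_brA coordb_what.
rewrite coords_brA // coords_what // /brcoef.
transitivity (\sum_(0 <= a < n) (a == i)%:R * \sum_(0 <= b < n) (b == j)%:R * Dcoef d a b m).
  apply: eq_big_nat => a /andP[_ an]; rewrite mulr_sumr; apply: eq_big_nat => b /andP[_ bn].
  by rewrite !coordb_bvec an bn !andbT; ring.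
by rewrite sum_nat_delta ltn_ord sum_nat_delta ltn_ord.
Qed.

Lemma brA_what (x y : V) :
  Br x y = \sum_(i < n) \sum_(j < n) (coordb i x * coordb j y) *: what d i j.
Proof.
apply: eq_coord => m mn.
  by rewrite coordb_brA linear_sum big1 // => i _; rewrite linear_sum big1 // => j _;
    rewrite linearZ /= coordb_what mulr0.
rewrite coords_brA // /brcoef big_mkord linear_sum; apply: eq_bigr => i _.
by rewrite big_mkord linear_sum; apply: eq_bigr => j _; rewrite linearZ /= coords_what.
Qed.

Lemma whatN i j : what d j i = - what d i j.
Proof. by rewrite /what -sumrN; apply: eq_bigr => k _; rewrite Dcoef_swap12 scaleNr. Qed.

Lemma what_diag i : what d i i = 0.
Proof. by rewrite /what big1 // => k _; rewrite Dcoef_diag12 scale0r. Qed.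

Lemma span_what0 : in_span_what d (0 : V).
Proof.
by exists (fun _ _ => 0); rewrite big1 // => i _; rewrite big1 // => j _; rewrite scale0r.
Qed.

Lemma span_whatD (x y : V) : in_span_what d x -> in_span_what d y -> in_span_what d (x + y).
Proof.
case=> c1 -> [c2 ->]; exists (fun i j => c1 i j + c2 i j).
rewrite -big_split; apply: eq_bigr => i _; rewrite -big_split; apply: eq_bigr => j _.
by rewrite scalerDl.
Qed.

Lemma span_what_sum I (r : seq I) (P : pred I) (F : I -> V) :
  (forall i, P i -> in_span_what d (F i)) -> in_span_what d (\sum_(i <- r | P i) F i).
Proof. by move=> FP; elim/big_ind: _ => //; [exact: span_what0 | exact: span_whatD]. Qed.

Lemma span_whatZ (i j : 'I_n) c : in_span_what d (c *: what d i j).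
Proof.
wlog ji : i j c / (j < i)%N => [hwlog|].
  case: (ltngtP i j) => [ij|ji|/val_inj->]; last 2 first.
  - exact: hwlog.
  - by rewrite what_diag scaler0; exact: span_what0.
  by rewrite whatN scalerN -scaleNr; apply: hwlog.
exists (fun a b => if (a == i) && (b == j) then c else 0).
rewrite (bigD1 i) //= (bigD1 j) //= !eqxx /=.
rewrite big1 => [|b /andP[_ /negbTE bj]]; last by rewrite bj scale0r.
by rewrite big1 ?addr0 // => a /negbTE ai; apply: big1 => b _; rewrite ai scale0r.
Qed.

Lemma derived_brA (x y : V) : in_derived Br (Br x y).
Proof. by exists [:: (x, y)]; rewrite big_seq1. Qed.

Lemma derived_sum I (r : seq I) (P : pred I) (F : I -> V) :
  (forall i, P i -> in_derived Br (F i)) -> in_derived Br (\sum_(i <- r | P i) F i).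
Proof.
move=> FP; elim/big_ind: _ => //; first by exists [::]; rewrite big_nil.
by move=> _ _ [s1 ->] [s2 ->]; exists (s1 ++ s2); rewrite big_cat.
Qed.

Lemma derived_span_what (w : V) : in_derived Br w <-> in_span_what d w.
Proof.
split=> [[s ->]|[c ->]].
  apply: span_what_sum => p _; rewrite brA_what.
  by apply: span_what_sum => i _; apply: span_what_sum => j _; apply: span_whatZ.
apply: derived_sum => i _; apply: derived_sum => j _.
by rewrite -brA_bvec -brAZl; apply: derived_brA.
Qed.

Lemma derived_inA2 (w : V) : in_derived Br w -> inA2 n w.
Proof.
case=> s ->; apply/inA2n => j; rewrite linear_sum big1 // => p _; exact: coordb_brA.
Qed.

Lemma center_orth_derived (x w : V) : in_center Br x -> in_derived Br w -> formA n w x = 0.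
Proof.
move=> xZ [s ->]; elim/big_ind: _ => [|a b a0 b0|[p q] _ /=]; first exact: formA0l.
  by have := formA_linl n 1 a b x; rewrite scale1r a0 b0 mulr0 addr0.
have := formA_invariant p q x.
by rewrite (brA_anti x p) xZ oppr0 [formA n q 0]formAC formA0l addr0.
Qed.

Lemma reduced_A2 : reduced Br <-> forall x, inA2 n x -> in_derived Br x.
Proof.
split=> [red x xA2|A2D x xZ]; first by apply: red => y; apply: brA_A2l.
apply: (A2D); apply/inA2n => j; have [jn|/coordb_out->//] := ltnP j n.
have := formA_bsvecr n x jn; rewrite jn => <-.
by rewrite formAC center_orth_derived //; apply: A2D; exact: inA2_bsvec.
Qed.

Lemma reduced_span_what : reduced Br <-> forall x, inA2 n x <-> in_span_what d x.
Proof.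
split=> [/reduced_A2 A2D x|A2S].
  by split=> [/A2D/derived_span_what // | /derived_span_what/derived_inA2].
by apply/reduced_A2 => x /A2S/derived_span_what.
Qed.

Lemma NNP_dmx_neq0 : NNP d ->
  exists k i j, [/\ (k < n)%N, (i < j < k)%N & dmx d k i j != 0].
Proof.
case=> k [kn [x [xA dx0]]].
have [i [j [ik jk ij0]]] := exists_dmx_neq0 kn xA dx0.
case: (ltngtP i j) => [lt|gt|eq].
- by exists k, i, j; rewrite lt jk.
- by exists k, j, i; rewrite gt ik dmxN // oppr_eq0.
- by move: ij0; rewrite eq dmx_diag ?eqxx.
Qed.

Lemma NNP_ge3 : NNP d -> (3 <= n)%N.
Proof. by case/NNP_dmx_neq0 => k [i [j [kn /andP[ij jk] _]]]; lia. Qed.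

Lemma brA_two_step_nilpotent : NNP d -> two_step_nilpotent Br.
Proof.
case/NNP_dmx_neq0 => k [i [j [kn /andP[ij jk] dij]]].
split=> [x w /derived_inA2/brA_A2r-> //|].
have [ilt jlt] : (i < n)%N /\ (j < n)%N by lia.
exists (what d i j); split.
  by rewrite -(brA_bvec (Ordinal ilt) (Ordinal jlt)); apply: derived_brA.
apply: contraNneq dij => w0.
by rewrite -(Dcoef_top3 kn (ltn_trans ij jk) jk) -coords_what // w0 raddf0.
Qed.

End Chain.

Lemma chain_skew (K : fieldType) n (d : nat -> 'M[K]_(2, n) -> 'M[K]_(2, n)) :
  is_chain d -> forall k, (k < n)%N -> forall x y, inA k x -> inA k y ->
  formA k (d k x) y + formA k x (d k y) = 0.
Proof. by move=> ch k /ch[]. Qed.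

Lemma chain_twoSP_im (K : fieldType) n (d : nat -> 'M[K]_(2, n) -> 'M[K]_(2, n)) :
  is_chain d -> twoSP d -> forall k, (k < n)%N -> forall x, inA k x -> inA2 k (d k x).
Proof.
move=> ch sp [|k] kn x xA; last by have [im _] := sp k.+1 isT kn; exact: im.
by have [dA _ _ _] := ch 0 kn; split=> [|i]; [exact: dA | exact: dA].
Qed.

Theorem lemma2p13 (K : fieldType) (n : nat) (d : nat -> 'M[K]_(2, n) -> 'M[K]_(2, n)) :
  [pchar K] =i pred0 ->
  is_chain d -> NNP d -> twoSP d ->
  (3 <= n)%N /\
  ([/\ is_quadratic_Lie (brA d n) (formA n),
       two_step_nilpotent (brA d n),
       (forall x, inA2 n x -> in_center (brA d n) x),
       ((forall i j : 'I_n, brA d n (bvec i) (bvec j) = what d i j) /\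
        (forall (i : 'I_n) y, brA d n (bsvec i) y = 0)) &
       (forall i j : 'I_n,
          [/\ formA (K := K) (n := n) n (bvec i) (bsvec j) = (i == j)%:R,
              formA (K := K) (n := n) n (bvec i) (bvec j) = 0 &
              formA (K := K) (n := n) n (bsvec i) (bsvec j) = 0])]
   /\
   (reduced (brA d n) <-> (forall x, inA2 n x <-> in_span_what d x))).
Proof.
move=> /pcharf0P charK ch nnp sp.
have two_neq0 : 2%:R != 0 :> K by rewrite charK.
have skew := chain_skew ch; have im := chain_twoSP_im ch sp.
split; first exact: NNP_ge3 two_neq0 skew im nnp.
split; [split|exact: reduced_span_what two_neq0 skew im].
- exact: brA_quadratic two_neq0 skew im.
- exact: brA_two_step_nilpotent two_neq0 skew im nnp.
- by move=> x xA2 y; apply: (brA_A2l two_neq0 skew im y xA2).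
- split=> [|i y]; first exact: brA_bvec two_neq0 skew im.
  exact: (brA_A2l two_neq0 skew im y (inA2_bsvec i)).
- move=> i j; rewrite formA_bsvecr // formA_bvecr // formA_bsvecr // ltn_ord.
  by rewrite coordb_bvec coords_bvec coordb_bsvec ltn_ord andbT eq_sym.
Qed.
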